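(* Let $\mathcal Z$ be an arbitrary set and $\mathcal H\subseteq\{0,1\}^{\mathcal Z}$ contain the all-zero function. Assume $c_{\mathrm{ver}}\ge c_{\mathrm{rew}}>0$. Then for every $h^\star\in\mathcal H$ and every probability distribution $\mathcal D$ on $\mathcal Z$ with $\Pr_{Z\sim\mathcal D}(h^\star(Z)=1)>0$, the policy $\mathcal A_{\mathrm{CS}}$ described in the context is sound and satisfies \[ \mathbb E\big[J(\mathcal A_{\mathrm{CS}};h^\star,\mathcal D)\big]\le 6\min\Big\{\mathfrak s_0(\mathcal H),\frac{c_{\mathrm{ver}}}{c_{\mathrm{rew}}}\Big\}\,J^\star(h^\star,\mathcal D). \]
   Context: Centered star number: $\mathfrak s_0(\mathcal H)$ is the largest $m\in\mathbb N$ such that there exist $z_1,\dots,z_m\in\mathcal Z$ and $h_1,\dots,h_m\in\mathcal H$ with $h_i(z_j)=\mathbf 1\{i=j\}$; it is $\infty$ if no finite maximum exists. Binary active search: an instance is $(h^\star,\mathcal D)$ with $h^\star\in\mathcal H$, $\mathcal D$ a distribution on $\mathcal Z$. A policy knows $\mathcal H$ and the costs but not $(h^\star,\mathcal D)$; it keeps a pool of generated unverified points and at each step either generates a fresh $Z\sim\mathcal D$ (cost $c_{\mathrm{rew}}$, $Z$ observed) or verifies a pool point $Z$ (cost $c_{\mathrm{ver}}$, observes $h^\star(Z)$, removes $Z$; stops and outputs $Z$ if the label is $1$). Sound: stops only on observing label $1$. Cost $J=c_{\mathrm{rew}}N_{\mathrm{rew}}+c_{\mathrm{ver}}N_{\mathrm{ver}}$,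 $+\infty$ if no positive observed. $J^\star(h^\star,\mathcal D)$ is the infimum of expected cost over such policies that also know $(h^\star,\mathcal D)$. Policy $\mathcal A_{\mathrm{CS}}$: If $\mathfrak s_0(\mathcal H)>c_{\mathrm{ver}}/c_{\mathrm{rew}}$, repeat: generate $Z\sim\mathcal D$, verify $Z$, return $Z$ if its label is $1$. Otherwise let $n=\lceil (c_{\mathrm{ver}}/c_{\mathrm{rew}})\mathfrak s_0(\mathcal H)\rceil$ and repeat: generate $Z_1,\dots,Z_n$ i.i.d. from $\mathcal D$; for each $h\in\mathcal H$ let $A_h=\{i\in[n]:h(Z_i)=1\}$; choose a minimum-cardinality set $I\subseteq[n]$ with $I\cap A_h\neq\emptyset$ for all $h\in\mathcal H$ with $A_h\ne\emptyset$; verify $Z_i$ for each $i\in I$, returning the first one with label $1$. *)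

From HB Require Import structures.
From mathcomp Require Import all_boot all_order all_algebra.
From mathcomp Require Import all_classical all_reals all_analysis.

Set Implicit Arguments.
Unset Strict Implicit.
Unset Printing Implicit Defensive.

Import Order.TTheory GRing.Theory Num.Theory.
Local Open Scope classical_set_scope.
Local Open Scope ring_scope.

Definition is_star (Z : Type) (H : set (Z -> bool)) (m : nat) : Prop :=
  exists (z : 'I_m -> Z) (h : 'I_m -> Z -> bool),
    (forall i, H (h i)) /\ (forall i j, h i (z j) = (i == j)).

(** s_0(H) as an extended real: the supremum of the admissible m
    (the admissible set is downward closed and contains 0, so this is the
    largest such m when it exists, and +oo otherwise). *)
Definition star_number (R : realType) (Z : Type) (H : set (Z -> bool))
  : \bar R :=
  ereal_sup [set ((m%:R : R)%:E) | m in [set m : nat | is_star H m]].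

(** Observations made by a policy: a generated point (observed), or the
    result of verifying the point generated at (global, 0-based)
    generation index k. *)
Inductive obs (Z : Type) := OGen of Z | OVer of nat & bool.
Arguments OGen {Z}.
Arguments OVer {Z}.

Inductive act := AGen | AVer of nat.

Definition policy (Z : Type) := seq (obs Z) -> act.

Record pstate (Z : Type) := PState {
  ps_hist : seq (obs Z);
  ps_ngen : nat;
  ps_nver : nat;
  ps_done : seq nat;
  ps_stop : bool;
  ps_dead : bool           (* an illegal action was taken: never stops *)
}.

Definition init_state (Z : Type) : pstate Z := PState [::] 0 0 [::] false false.

(** One step of the interaction. [s k] is the k-th generated point
    (the i.i.d. sample stream) and [f] is the true labeling h*. *)
Definition pstep (Z : Type) (pi : policy Z) (s : nat -> Z) (f : Z -> bool)
    (st : pstate Z) : pstate Z :=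
  if ps_stop st || ps_dead st then st else
  match pi (ps_hist st) with
  | AGen => PState (rcons (ps_hist st) (OGen (s (ps_ngen st))))
                   (ps_ngen st).+1 (ps_nver st) (ps_done st) false false
  | AVer k =>
      if (k < ps_ngen st)%N && (k \notin ps_done st) then
        PState (rcons (ps_hist st) (OVer k (f (s k))))
               (ps_ngen st) (ps_nver st).+1 (k :: ps_done st) (f (s k)) false
      else PState (ps_hist st) (ps_ngen st) (ps_nver st) (ps_done st) false true
  end.

Definition state_at (Z : Type) (pi : policy Z) (s : nat -> Z) (f : Z -> bool)
    (t : nat) : pstate Z :=
  iter t (pstep pi s f) (init_state Z).

(** Cost J = c_rew N_rew + c_ver N_ver at the stopping time, +oo if the
    policy never observes a positive label. *)
Definition cost (R : realType) (Z : Type) (crew cver : R) (pi : policy Z)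
    (s : nat -> Z) (f : Z -> bool) : \bar R :=
  ereal_inf (range (fun t : nat =>
    let st := state_at pi s f t in
    if ps_stop st
    then (crew * (ps_ngen st)%:R + cver * (ps_nver st)%:R)%:E
    else +oo%E)).

Definition mutually_independent (R : realType) (d dO : measure_display)
    (Z : measurableType d) (Omega : measurableType dO)
    (P : probability Omega R) (X : nat -> Omega -> Z) : Prop :=
  forall (n : nat) (k : 'I_n -> nat), injective k ->
  forall A : 'I_n -> set Z, (forall i, measurable (A i)) ->
    P (\bigcap_(i in [set: 'I_n]) (X (k i) @^-1` A i)) =
    (\prod_(i < n) P (X (k i) @^-1` A i))%E.

Definition exp_cost (R : realType) (dO : measure_display) (Z : Type)
    (Omega : measurableType dO) (P : probability Omega R)
    (X : nat -> Omega -> Z) (crew cver : R) (pi : policy Z) (f : Z -> bool)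
    : \bar R :=
  (\int[P]_w cost crew cver pi (fun k => X k w) f)%E.

(** J*(h*, D): infimum of the expected cost over all policies (which may
    depend arbitrarily on h* and D). *)
Definition Jstar (R : realType) (dO : measure_display) (Z : Type)
    (Omega : measurableType dO) (P : probability Omega R)
    (X : nat -> Omega -> Z) (crew cver : R) (f : Z -> bool) : \bar R :=
  ereal_inf [set exp_cost P X crew cver pi f | pi in [set: policy Z]].

(** label of the i-th point of [pts] under h (false beyond the end). *)
Definition lab (Z : Type) (h : Z -> bool) (pts : seq Z) (i : nat) : bool :=
  if drop i pts is z :: _ then h z else false.

Definition hitting (Z : Type) (H : set (Z -> bool)) (pts : seq Z)
    (I : seq nat) : Prop :=
  forall h, H h -> (exists i, lab h pts i) -> exists2 i, i \in I & lab h pts i.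

(** [I] (listed without repetition, in verification order) is a
    minimum-cardinality hitting set contained in [size pts]. *)
Definition min_hitting (Z : Type) (H : set (Z -> bool)) (pts : seq Z)
    (I : seq nat) : Prop :=
  [/\ uniq I, all (fun i => (i < size pts)%N) I, hitting H pts I &
      forall I' : seq nat, uniq I' -> all (fun i => (i < size pts)%N) I' ->
        hitting H pts I' -> (size I <= size I')%N].

Definition gens (Z : Type) (hs : seq (obs Z)) : seq Z :=
  pmap (fun o => if o is OGen z then Some z else None) hs.

Definition is_gen (Z : Type) (o : obs Z) : bool :=
  if o is OGen _ then true else false.

(** block size n = ceil((c_ver/c_rew) s_0(H)) (used only when s_0 is finite) *)
Definition cs_n (R : realType) (Z : Type) (H : set (Z -> bool)) (crew cver : R)
  : nat := `|Num.ceil (cver / crew * fine (star_number R H))|%N.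

(** A_CS, with the choice of minimum hitting set and of the verification
    order given by [sel]. *)
Definition ACS (R : realType) (Z : Type) (H : set (Z -> bool)) (crew cver : R)
    (sel : seq Z -> seq nat) : policy Z := fun hs =>
  if ((cver / crew)%:E < star_number R H)%E then
    (* generate Z, verify Z, repeat *)
    if last (OVer 0 false) hs is OGen _ then AVer (count (@is_gen Z) hs).-1
    else AGen
  else
    let n := cs_n H crew cver in
    let g := count (@is_gen Z) hs in
    if (g == 0)%N || (g %% n != 0)%N then AGen else
    let pts := drop (g - n) (gens hs) in
    let L := sel pts in
    let m := find (@is_gen Z) (rev hs) in
    if (m < size L)%N then AVer (g - n + nth 0 L m) else AGen.

From HB Require Import structures.
From mathcomp Require Import all_boot all_order all_algebra.
From mathcomp Require Import all_classical all_reals all_analysis.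
From mathcomp Require Import ring lra.

Import Order.TTheory GRing.Theory Num.Theory.
Local Open Scope classical_set_scope.
Local Open Scope ring_scope.

(* Let p be the probability of a positive sample and T the index of the first
   positive sample.  A sound policy must generate the T + 1 samples up to it and
   verify at least once, so J* >= max (c_rew / p, c_ver).  When s_0 > c_ver / c_rew,
   A_CS pays (c_rew + c_ver) (T + 1), of expectation (c_rew + c_ver) / p.
   Otherwise A_CS works in blocks of n = ceil ((c_ver / c_rew) s_0) samples.  A
   minimum hitting set is a centered star (each of its points is labelled
   positive by a hypothesis vanishing on the rest of the set), so a block costs at
   most n c_rew + s_0 c_ver; and as h* is in H, the first block containing a
   positive sample is the last one.  The number of blocks is geometric with
   success probability 1 - (1 - p)^n, and n p (1 - p)^n <= 1 - (1 - p)^n bounds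
   the resulting expected cost by 6 s_0 max (c_rew / p, c_ver). *)

Set Implicit Arguments.
Unset Strict Implicit.

Section Protocol.
Variables (Z : Type) (pi : policy Z) (s : nat -> Z) (f : Z -> bool).

Lemma state_atS t : state_at pi s f t.+1 = pstep pi s f (state_at pi s f t).
Proof. by rewrite /state_at iterS. Qed.

Lemma stopped_state_positive t : ps_stop (state_at pi s f t) ->
  (0 < ps_nver (state_at pi s f t))%N /\
  exists2 k, (k < ps_ngen (state_at pi s f t))%N & f (s k).
Proof.
elim: t => [//|t IH]; rewrite state_atS /pstep.
case: (state_at pi s f t) IH => hs g v dn st dd /= IH.
case: ifP => [_ //|/norP [st0 dd0]].
case: (pi hs) => [|k] //=.
by case: ifP => //= /andP [kg _] fk; split => //; exists k.
Qed.

End Protocol.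

Lemma gens_rcons_gen (Z : Type) (hs : seq (obs Z)) z :
  gens (rcons hs (OGen z)) = rcons (gens hs) z.
Proof. by rewrite /gens -cats1 pmap_cat cats1. Qed.

Lemma gens_rcons_ver (Z : Type) (hs : seq (obs Z)) k b :
  gens (rcons hs (OVer k b)) = gens hs.
Proof. by rewrite /gens -cats1 pmap_cat cats0. Qed.

Lemma count_is_gen (Z : Type) (hs : seq (obs Z)) :
  count (@is_gen Z) hs = size (gens hs).
Proof. by rewrite /gens size_pmap; apply: eq_count => -[]. Qed.

Lemma map_iota0S (T : Type) (s : nat -> T) g :
  map s (iota 0 g.+1) = rcons (map s (iota 0 g)) (s g).
Proof. by rewrite -addn1 iotaD map_cat cats1. Qed.

Lemma lab_map_iota (Z : Type) (h : Z -> bool) (s : nat -> Z) a n i :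
  lab h (map s (iota a n)) i = (i < n)%N && h (s (a + i)%N).
Proof.
rewrite /lab -map_drop drop_iota.
have [lt|ge] := ltnP i n; first by rewrite -(subnSK lt).
by move: ge; rewrite -subn_eq0 => /eqP ->.
Qed.

Lemma lab_nth (Z : Type) (h : Z -> bool) (pts : seq Z) (z0 : Z) i :
  (i < size pts)%N -> lab h pts i = h (nth z0 pts i).
Proof. by move=> hi; rewrite /lab (drop_nth z0 hi). Qed.

Section StarNumber.
Variables (Z : Type) (H : set (Z -> bool)).

(* Minimality of [I] means that dropping any [x] from it breaks the hitting
   property, and the hypothesis witnessing this labels [x] alone positive. *)
Lemma min_hitting_witness (pts : seq Z) (I : seq nat) x :
  min_hitting H pts I -> x \in I ->
  exists2 h, H h & forall j, j \in I -> lab h pts j = (j == x).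
Proof.
case=> uI aI hI minI xI.
have /existsNP [h /not_implyP [Hh /not_implyP [ex nex]]] :
    ~ hitting H pts (rem x I).
  move=> hit.
  have I_gt0 : (0 < size I)%N by rewrite lt0n size_eq0; apply: contraTneq xI => ->.
  have aR : all (fun i => (i < size pts)%N) (rem x I).
    by apply/allP => y /mem_rem /(allP aI).
  by have := minI _ (rem_uniq _ uI) aR hit; rewrite size_rem // -ltnS prednK // ltnn.
have other j : j \in I -> j != x -> lab h pts j = false.
  move=> jI jx; apply/negP => lj; apply: nex; exists j => //.
  by rewrite (mem_rem_uniq _ uI) inE jx.
exists h => // j jI; have [->|jx] := eqVneq j x; last exact: other.
have [j' j'I lj'] := hI h Hh ex.
by have [<- //|j'x] := eqVneq j' x; rewrite other in lj'.
Qed.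

Lemma is_star_min_hitting (pts : seq Z) (I : seq nat) (z0 : Z) :
  min_hitting H pts I -> is_star H (size I).
Proof.
move=> hmin; have [uI aI _ _] := hmin.
have wit (a : 'I_(size I)) := min_hitting_witness hmin (mem_nth 0 (ltn_ord a)).
exists (fun a => nth z0 pts (nth 0 I a)), (fun a => projT1 (cid2 (wit a))).
split=> [a|a b]; first by case: (projT2 (cid2 (wit a))).
have bI : nth 0 I b \in I := mem_nth 0 (ltn_ord b).
case: (projT2 (cid2 (wit a))) => _ /(_ _ bI).
by rewrite (lab_nth _ z0 (allP aI _ bI)) => ->; rewrite nth_uniq // eq_sym.
Qed.

Variable R : realType.

Lemma size_min_hitting_le_star (pts : seq Z) (I : seq nat) (z0 : Z) :
  min_hitting H pts I -> ((size I)%:R%:E <= star_number R H)%E.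
Proof.
move=> hmin; apply: ereal_sup_ubound; exists (size I) => //.
exact: is_star_min_hitting z0 hmin.
Qed.

Lemma star_number_ge1 (h : Z -> bool) (z : Z) : H h -> h z ->
  (1 <= star_number R H)%E.
Proof.
move=> Hh hz; apply: ereal_sup_ubound; exists 1%N => //.
by exists (fun _ => z), (fun _ => h); split => // i j; rewrite !ord1 hz eqxx.
Qed.

End StarNumber.

Section Alternating.
Variables (R : realType) (Z : Type) (H : set (Z -> bool)) (crew cver : R)
  (sel : seq Z -> seq nat) (s : nat -> Z) (f : Z -> bool).
Hypothesis star_gt : ((cver / crew)%:E < star_number R H)%E.
Let pol := ACS H crew cver sel.

Lemma ACS_alternating_round j hs dn :
  state_at pol s f (2 * j) = PState hs j j dn false false ->
  count (@is_gen Z) hs = j -> ~~ is_gen (last (OVer 0 false) hs) ->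
  all (fun x => x < j)%N dn ->
  state_at pol s f (2 * j.+1) =
    PState (rcons (rcons hs (OGen (s j))) (OVer j (f (s j))))
      j.+1 j.+1 (j :: dn) (f (s j)) false.
Proof.
move=> e c l a.
have gen : pol hs = AGen by rewrite /pol /ACS star_gt; case: (last _ hs) l.
have c' : count (@is_gen Z) (rcons hs (OGen (s j))) = j.+1.
  by rewrite -cats1 count_cat c /= addn1.
have ver : pol (rcons hs (OGen (s j))) = AVer j.
  by rewrite /pol /ACS star_gt last_rcons c'.
rewrite mulnS add2n !state_atS e /pstep /= gen /= ver /= ltnSn /=.
by have -> : j \notin dn by apply/negP => /(allP a); rewrite ltnn.
Qed.

Lemma ACS_alternating_negative_prefix j : (forall i, (i < j)%N -> ~~ f (s i)) ->
  exists hs dn, [/\ state_at pol s f (2 * j) = PState hs j j dn false false,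
      count (@is_gen Z) hs = j, ~~ is_gen (last (OVer 0 false) hs) &
      all (fun x => x < j)%N dn].
Proof.
elim: j => [_|j IH neg]; first by exists [::], [::].
have [hs [dn [e c l a]]] := IH (fun i hi => neg i (ltnW hi)).
have c' : count (@is_gen Z) (rcons hs (OGen (s j))) = j.+1.
  by rewrite -cats1 count_cat c /= addn1.
exists (rcons (rcons hs (OGen (s j))) (OVer j (f (s j)))), (j :: dn).
rewrite (ACS_alternating_round e c l a) (negbTE (neg j (ltnSn j))); split => //.
- by rewrite -[X in count _ X]cats1 count_cat c' /= !addn0.
- by rewrite last_rcons.
- by rewrite /= ltnSn; apply: sub_all a => x; apply: ltnW.
Qed.

End Alternating.

Section Blocks.
Variables (R : realType) (Z : Type) (H : set (Z -> bool)) (crew cver : R)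
  (sel : seq Z -> seq nat) (s : nat -> Z) (f : Z -> bool).
Hypothesis star_le : ~~ ((cver / crew)%:E < star_number R H)%E.
Let pol := ACS H crew cver sel.
Let n := cs_n H crew cver.
Hypothesis n_gt0 : (0 < n)%N.
Hypothesis sel_min : forall pts, min_hitting H pts (sel pts).

Definition block b := map s (iota (b * n) n).
Definition block_hits b := sel (block b).

Definition regular_state g v (hs : seq (obs Z)) dn (st : pstate Z) :=
  [/\ st = PState hs g v dn false false, gens hs = map s (iota 0 g) &
      all (fun x => x < g)%N dn].

Lemma size_block b : size (block b) = n.
Proof. by rewrite /block size_map size_iota. Qed.

Lemma drop_first_blocks b : drop (b * n) (map s (iota 0 (b.+1 * n))) = block b.
Proof. by rewrite -map_drop drop_iota add0n mulSn addnK. Qed.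

Lemma block_hits_lt b j : (j < size (block_hits b))%N -> (nth 0 (block_hits b) j < n)%N.
Proof.
move=> hj; case: (sel_min (block b)) => _ al _ _.
by have := allP al _ (mem_nth 0 hj); rewrite size_block.
Qed.

Lemma block_hits_uniq b : uniq (block_hits b).
Proof. by case: (sel_min (block b)). Qed.

Lemma ACS_blocksE hs : pol hs =
    let g := count (@is_gen Z) hs in
    if (g == 0)%N || (g %% n != 0)%N then AGen else
    let L := sel (drop (g - n) (gens hs)) in
    let m := find (@is_gen Z) (rev hs) in
    if (m < size L)%N then AVer (g - n + nth 0 L m) else AGen.
Proof. by rewrite /pol /ACS (negbTE star_le). Qed.

(* [find is_gen (rev hs)] counts the verifications since the last generation;
   at the start of block [b.+1] it has exhausted the hits of block [b]. *)
Definition block_start b (hs : seq (obs Z)) :=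
  b = 0%N \/ (size (block_hits b.-1) <= find (@is_gen Z) (rev hs))%N.

Lemma ACS_generation_phase b t v hs dn :
  regular_state (b * n) v hs dn (state_at pol s f t) -> block_start b hs ->
  forall i, (i <= n)%N -> exists hs',
    regular_state (b * n + i) v hs' dn (state_at pol s f (t + i)) /\
    (if i == 0%N then hs' = hs else find (@is_gen Z) (rev hs') = 0%N).
Proof.
move=> st0 start; elim => [_|i IH lt_in]; first by exists hs; rewrite !addn0.
have [hs' [[e gs a] last_gen]] := IH (ltnW lt_in).
have cg : count (@is_gen Z) hs' = (b * n + i)%N.
  by rewrite count_is_gen gs size_map size_iota.
have gen : pol hs' = AGen.
  rewrite ACS_blocksE /= cg.
  have [i0|i0] := eqVneq i 0%N; last by rewrite modnMDl modn_small // i0 orbT.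
  move: last_gen; rewrite i0 addn0 => /= ->.
  case: start => [-> //|hits_done]; have [-> //|b0] := eqVneq b 0%N.
  case: st0 => _ gs0 _.
  rewrite gs0 muln_eq0 (negbTE b0) /= eqn0Ngt n_gt0 modnMl /=.
  move: hits_done; have -> : b = b.-1.+1 by rewrite prednK // lt0n.
  by rewrite /= mulSn addKn -mulSn drop_first_blocks ltnNge => ->.
exists (rcons hs' (OGen (s (b * n + i)))); split; last by rewrite rev_rcons.
rewrite !addnS state_atS e /pstep /= gen; split => //.
  by rewrite gens_rcons_gen gs map_iota0S.
by apply: sub_all a => x; apply: ltnW.
Qed.

Definition verified_upto b m (dn : seq nat) := forall x, x \in dn ->
  (x < b * n)%N \/ exists2 j, (j < m)%N & x = (b * n + nth 0 (block_hits b) j)%N.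

Lemma ACS_verify_step b t m v hs dn :
  regular_state (b.+1 * n) v hs dn (state_at pol s f t) ->
  find (@is_gen Z) (rev hs) = m -> (m < size (block_hits b))%N ->
  verified_upto b m dn ->
  let k := (b * n + nth 0 (block_hits b) m)%N in
  (k < b.+1 * n)%N /\
  state_at pol s f t.+1 =
    PState (rcons hs (OVer k (f (s k)))) (b.+1 * n) v.+1 (k :: dn) (f (s k)) false.
Proof.
case=> e gs a fm hm done k.
have kl : (k < b.+1 * n)%N by rewrite /k mulSnr ltn_add2l block_hits_lt.
split => //.
have cg : count (@is_gen Z) hs = (b.+1 * n)%N.
  by rewrite count_is_gen gs size_map size_iota.
have ver : pol hs = AVer k.
  rewrite ACS_blocksE /= cg muln_eq0 /= eqn0Ngt n_gt0 /= modnMl /=.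
  have -> : (b.+1 * n - n = b * n)%N by rewrite mulSn addKn.
  by rewrite gs drop_first_blocks fm -/(block_hits b) hm.
rewrite state_atS e /pstep /= ver kl /=.
suff -> : k \notin dn by [].
apply/negP => /done [|[j jm /addnI /eqP]]; first by rewrite /k ltnNge leq_addr.
rewrite nth_uniq ?block_hits_uniq //; last exact: ltn_trans jm hm.
by move/eqP => ej; move: jm; rewrite ej ltnn.
Qed.

Lemma ACS_verification_phase b t v hs dn :
  regular_state (b.+1 * n) v hs dn (state_at pol s f t) ->
  find (@is_gen Z) (rev hs) = 0%N -> all (fun x => x < b * n)%N dn ->
  forall m, (m <= size (block_hits b))%N ->
  (forall j, (j < m)%N -> ~~ f (s (b * n + nth 0 (block_hits b) j)%N)) ->
  exists hs' dn', [/\ regular_state (b.+1 * n) (v + m) hs' dn' (state_at pol s f (t + m)),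
    find (@is_gen Z) (rev hs') = m & verified_upto b m dn'].
Proof.
move=> st0 f0 a; elim => [_ _|m IH hm neg].
  by exists hs, dn; rewrite !addn0; split => // x /(allP a); left.
have [hs' [dn' [st' fm done]]] := IH (ltnW hm) (fun j hj => neg j (ltnW hj)).
have [kl e] := ACS_verify_step st' fm hm done.
set k := (b * n + nth 0 (block_hits b) m)%N in kl e.
have fk : f (s k) = false by apply/negbTE/neg.
exists (rcons hs' (OVer k false)), (k :: dn'); rewrite !addnS.
case: st' => _ gs a'; split.
- split => //; first by rewrite e fk.
    by rewrite gens_rcons_ver.
  by rewrite /= kl.
- by rewrite rev_rcons /= fm.
- move=> x; rewrite inE => /orP [/eqP ->|/done [lt|[j jm ej]]].
  + by right; exists m.
  + by left.
  + by right; exists j => //; apply: ltnW.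
Qed.

Hypothesis Hf : H f.

Lemma ACS_negative_block b t v hs dn :
  regular_state (b * n) v hs dn (state_at pol s f t) -> block_start b hs ->
  (forall i, (i < n)%N -> ~~ f (s (b * n + i)%N)) ->
  exists t' hs' dn',
    regular_state (b.+1 * n) (v + size (block_hits b)) hs' dn' (state_at pol s f t') /\
    block_start b.+1 hs'.
Proof.
move=> st0 start neg.
have [hs1 [st1 f1]] := ACS_generation_phase st0 start (leqnn n).
rewrite -mulSnr (negbTE (lt0n_neq0 n_gt0)) in st1 f1.
have a : all (fun x => x < b * n)%N dn by case: st0.
have [hs2 [dn2 [st2 f2 _]]] := ACS_verification_phase st1 f1 a (leqnn _)
   (fun j hj => neg _ (block_hits_lt hj)).
by exists (t + n + size (block_hits b))%N, hs2, dn2; split; last by right; rewrite f2.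
Qed.

Lemma ACS_positive_block b t v hs dn :
  regular_state (b * n) v hs dn (state_at pol s f t) -> block_start b hs ->
  (exists2 i, (i < n)%N & f (s (b * n + i)%N)) ->
  exists t', [/\ ps_stop (state_at pol s f t'),
    ps_ngen (state_at pol s f t') = (b.+1 * n)%N &
    (ps_nver (state_at pol s f t') <= v + size (block_hits b))%N].
Proof.
move=> st0 start [i0 i0n fi0].
have [hs1 [st1 f1]] := ACS_generation_phase st0 start (leqnn n).
rewrite -mulSnr (negbTE (lt0n_neq0 n_gt0)) in st1 f1.
have a : all (fun x => x < b * n)%N dn by case: st0.
have [j jL fj] : exists2 j, j \in block_hits b & f (s (b * n + j)%N).
  case: (sel_min (block b)) => _ _ hit _.
  have [|j jL] := hit f Hf; first by exists i0; rewrite /block lab_map_iota i0n.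
  by rewrite /block lab_map_iota => /andP [_ fj]; exists j.
pose hit m := (m < size (block_hits b))%N && f (s (b * n + nth 0 (block_hits b) m)%N).
have [|m0 /andP [m0s fm0] m0_min] := ex_minnP (_ : exists m, hit m).
  by exists (index j (block_hits b)); rewrite /hit index_mem jL nth_index.
have neg j' : (j' < m0)%N -> ~~ f (s (b * n + nth 0 (block_hits b) j')%N).
  move=> lt; apply/negP => fj'.
  by have := m0_min j'; rewrite /hit fj' (ltn_trans lt m0s) leqNgt lt => /(_ isT).
have [hs2 [dn2 [st2 f2 done]]] := ACS_verification_phase st1 f1 a (ltnW m0s) neg.
have [_ e] := ACS_verify_step st2 f2 m0s done.
by exists (t + n + m0).+1; rewrite e /=; split => //; rewrite -addnS leq_add2l.
Qed.

Variable S : R.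
Hypothesis size_sel_le : forall pts, ((size (sel pts))%:R <= S :> R).

Lemma ACS_negative_blocks b : (forall i, (i < b * n)%N -> ~~ f (s i)) ->
  exists t v hs dn, [/\ regular_state (b * n) v hs dn (state_at pol s f t),
    (v%:R <= b%:R * S :> R) & block_start b hs].
Proof.
elim: b => [_|b IH neg].
  by exists 0%N, 0%N, [::], [::]; rewrite mul0r; split => //; left.
have [|t [v [hs [dn [st hv start]]]]] := IH.
  by move=> i hi; apply: neg; apply: leq_trans hi _; rewrite leq_mul2r leqnSn orbT.
have [|t' [hs' [dn' [st' start']]]] := ACS_negative_block st start.
  by move=> i hi; apply: neg; rewrite mulSnr ltn_add2l.
exists t', (v + size (block_hits b))%N, hs', dn'; split => //.
by rewrite natrD -addn1 natrD mulrDl mul1r lerD ?size_sel_le.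
Qed.

Lemma ACS_blocks_stop T : f (s T) ->
  exists B t, [/\ (forall i, (i < B * n)%N -> ~~ f (s i)),
    ps_stop (state_at pol s f t),
    ps_ngen (state_at pol s f t) = (B.+1 * n)%N &
    ((ps_nver (state_at pol s f t))%:R <= B.+1%:R * S :> R)].
Proof.
move=> fT.
have [T1 fT1 T1_min] := ex_minnP (ex_intro (fun i => f (s i)) T fT).
set B := (T1 %/ n)%N.
have neg i : (i < B * n)%N -> ~~ f (s i).
  move=> hi; apply/negP => fi.
  by have := leq_trans hi (leq_divM T1 n); rewrite ltnNge (T1_min i fi).
have [t [v [hs [dn [st hv start]]]]] := ACS_negative_blocks neg.
have [|t' [stop ng nv]] := ACS_positive_block st start.
  by exists (T1 %% n)%N; rewrite ?ltn_pmod // /B -divn_eq.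
exists B, t'; split => //; apply: le_trans (_ : ((v + size (block_hits B))%:R <= _)).
  by rewrite ler_nat.
by rewrite natrD -addn1 natrD mulrDl mul1r lerD ?size_sel_le.
Qed.

End Blocks.

Definition negative_prefix (Z : Type) (f : Z -> bool) (s : nat -> Z) (m : nat) : bool :=
  [forall i : 'I_m, ~~ f (s i)].

Lemma negative_prefixP (Z : Type) (f : Z -> bool) (s : nat -> Z) m :
  reflect (forall i, (i < m)%N -> ~~ f (s i)) (negative_prefix f s m).
Proof.
apply: (iffP forallP) => [neg i hi|neg i]; last exact: neg.
exact: (neg (Ordinal hi)).
Qed.

Section BlockCountSeries.
Variables (R : realType) (Z : Type) (f : Z -> bool) (s : nat -> Z).

(* [K] times the number of length-[n] blocks up to and including the first
   one that contains a positive sample. *)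
Definition block_count_series (K : R) (n : nat) : \bar R :=
  (\sum_(0 <= k <oo) (K * (negative_prefix f s (n * k))%:R)%:E)%E.

Lemma block_count_series_ge (K : R) n B : 0 <= K ->
  (forall i, (i < n * B)%N -> ~~ f (s i)) ->
  ((B.+1%:R * K)%:E <= block_count_series K n)%E.
Proof.
move=> K0 neg; apply: le_trans (nneseries_lim_ge B.+1 _); last first.
  by move=> k _ _; rewrite lee_fin mulr_ge0.
rewrite sumEFin lee_fin.
have -> : \sum_(0 <= k < B.+1) (K * (negative_prefix f s (n * k))%:R) =
    \sum_(0 <= k < B.+1) K.
  apply: eq_big_nat => k /andP [_ kB].
  suff -> : negative_prefix f s (n * k) by rewrite mulr1.
  apply/negative_prefixP => i hi; apply: neg; apply: leq_trans hi _.
  by rewrite leq_mul2l -ltnS kB orbT.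
by rewrite sumr_const_nat subn0 mulr_natl.
Qed.

Lemma block_count_series_all_negative (K : R) n : 0 < K ->
  (forall i, ~~ f (s i)) -> block_count_series K n = +oo%E.
Proof.
move=> K0 neg; apply/eqyP => r r0.
pose B := Num.Def.archi_bound (r / K).
apply: le_trans (block_count_series_ge (n:=n) (B:=B) (ltW K0) (fun i _ => neg i)).
rewrite lee_fin -ler_pdivrMr //; apply: le_trans (ltW (archi_boundP _)) _.
  by rewrite divr_ge0 // ltW.
by rewrite ler_nat.
Qed.

Lemma block_count_series1_le (K : R) T : 0 <= K -> f (s T) ->
  (block_count_series K 1 <= (T.+1%:R * K)%:E)%E.
Proof.
move=> K0 fT.
rewrite /block_count_series (nneseries_split 0 T.+1); last first.
  by move=> k _; rewrite lee_fin mulr_ge0.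
rewrite add0n eseries0 ?adde0; last first.
  move=> i iT _; suff -> : negative_prefix f s (1 * i) = false by rewrite mulr0.
  by apply/negP => /negative_prefixP /(_ T); rewrite mul1n iT fT => /(_ isT).
rewrite sumEFin lee_fin.
apply: le_trans (_ : \sum_(0 <= k < T.+1) K <= _).
  by apply: ler_sum => k _; rewrite ler_piMr // lern1 leq_b1.
by rewrite sumr_const_nat subn0 mulr_natl.
Qed.

End BlockCountSeries.

Section Costs.
Variables (R : realType) (Z : Type) (crew cver : R) (s : nat -> Z) (f : Z -> bool).
Hypotheses (crew_gt0 : 0 < crew) (crew_le_cver : crew <= cver).

Let cver_gt0 : 0 < cver. Proof. exact: lt_le_trans crew_gt0 crew_le_cver. Qed.

Lemma cost_ge_block_count_series1 (pi : policy Z) :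
  (block_count_series f s crew 1 <= cost crew cver pi s f)%E.
Proof.
apply/ereal_infP => _ [t _ <-] /=; case stop: (ps_stop _); last exact: leey.
have [_ [k kn fk]] := stopped_state_positive stop.
apply: le_trans (block_count_series1_le (ltW crew_gt0) fk) _; rewrite lee_fin.
apply: le_trans (_ : (ps_ngen (state_at pi s f t))%:R * crew <= _).
  by rewrite ler_wpM2r ?ler_nat // ltW.
by rewrite mulrC lerDl mulr_ge0 // ltW.
Qed.

Lemma cost_ge_cver (pi : policy Z) : (cver%:E <= cost crew cver pi s f)%E.
Proof.
apply/ereal_infP => _ [t _ <-] /=; case stop: (ps_stop _); last exact: leey.
have [nv_gt0 _] := stopped_state_positive stop; rewrite lee_fin.
apply: le_trans (_ : cver * (ps_nver (state_at pi s f t))%:R <= _).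
  by rewrite -[X in X <= _]mulr1 ler_wpM2l ?ler1n // ltW.
by rewrite lerDr mulr_ge0 // ltW.
Qed.

Variables (H : set (Z -> bool)) (sel : seq Z -> seq nat).

Lemma cost_ACS_alternating_le : ((cver / crew)%:E < star_number R H)%E ->
  (cost crew cver (ACS H crew cver sel) s f <=
   block_count_series f s (crew + cver) 1)%E.
Proof.
move=> star_gt; have [[T0 fT0]|] := pselect (exists i, f (s i)); last first.
  move=> /forallNP neg; rewrite block_count_series_all_negative ?leey ?addr_gt0 //.
  by move=> i; apply/negP/neg.
have [T fT T_min] := ex_minnP (ex_intro (fun i => f (s i)) T0 fT0).
have neg i : (i < T)%N -> ~~ f (s i).
  by move=> iT; apply/negP => /T_min; rewrite leqNgt iT.
have [hs [dn [e c l a]]] := ACS_alternating_negative_prefix sel star_gt neg.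
apply: (@le_trans _ _ ((crew * T.+1%:R + cver * T.+1%:R)%:E)).
  apply: ereal_inf_lbound; exists (2 * T.+1)%N => //.
  by rewrite (ACS_alternating_round star_gt e c l a) /= fT.
apply: le_trans (block_count_series_ge (n:=1) _ _); last 2 first.
- by rewrite addr_ge0 // ltW.
- by move=> i; rewrite mul1n; apply: neg.
by rewrite lee_fin mulrDr ![_%:R * _]mulrC.
Qed.

Hypotheses (star_le : ~~ ((cver / crew)%:E < star_number R H)%E)
  (n_gt0 : (0 < cs_n H crew cver)%N)
  (sel_min : forall pts, min_hitting H pts (sel pts)) (Hf : H f).
Variable S : R.
Hypothesis size_sel_le : forall pts, ((size (sel pts))%:R <= S :> R).

Lemma cost_ACS_blocks_le :
  (cost crew cver (ACS H crew cver sel) s f <=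
   block_count_series f s ((cs_n H crew cver)%:R * crew + S * cver) (cs_n H crew cver))%E.
Proof.
set n := cs_n H crew cver.
have S_ge0 : 0 <= S by apply: le_trans (size_sel_le [::]).
have [[T fT]|] := pselect (exists i, f (s i)); last first.
  move=> /forallNP neg; rewrite block_count_series_all_negative ?leey //.
    by apply: ltr_wpDr; rewrite ?mulr_ge0 ?mulr_gt0 ?ltr0n // ltW.
  by move=> i; apply/negP/neg.
have [B [t [neg stop ng nv]]] := ACS_blocks_stop star_le n_gt0 sel_min Hf size_sel_le fT.
set st := state_at _ s f t in stop ng nv.
apply: le_trans (_ : ((crew * (ps_ngen st)%:R + cver * (ps_nver st)%:R)%:E <= _))%E.
  by apply: ereal_inf_lbound; exists t => //=; rewrite stop.
apply: le_trans (block_count_series_ge (B:=B) _ _); last 2 first.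
- by rewrite addr_ge0 // mulr_ge0 // ltW.
- by move=> i hi; apply: neg; rewrite mulnC.
have -> : B.+1%:R * (n%:R * crew + S * cver) =
    crew * (B.+1 * n)%:R + cver * (B.+1%:R * S) by rewrite natrM; ring.
by rewrite lee_fin ng lerD2l ler_wpM2l // ltW.
Qed.

End Costs.

Lemma eseries_geometric (R : realType) (a r : R) : 0 <= r -> r < 1 ->
  (\sum_(0 <= k <oo) (a * r ^+ k)%:E)%E = (a / (1 - r))%:E.
Proof.
move=> r_ge0 r_lt1; have r_norm : `|r| < 1 by rewrite ger0_norm.
rewrite (_ : (fun n => \sum_(0 <= k < n) (a * r ^+ k)%:E)%E =
    EFin \o series (geometric a r)).
  rewrite EFin_lim; last exact: is_cvg_geometric_series.
  by congr EFin; apply: norm_cvg_lim; exact: cvg_geometric_series.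
by apply/funext => N /=; rewrite sumEFin.
Qed.

(* No measurability is needed: the integral of a nonnegative function is the
   supremum of the integrals of its simple minorants. *)
Lemma ge0_le_integral_nonmeasurable (R : realType) (d : measure_display)
    (T : measurableType d) (mu : measure T R) (f g : T -> \bar R) :
  (forall x, (0 <= f x)%E) -> (forall x, (f x <= g x)%E) ->
  (\int[mu]_x f x <= \int[mu]_x g x)%E.
Proof.
move=> f_ge0 fg; have g_ge0 x : (0 <= g x)%E by exact: le_trans (f_ge0 x) (fg x).
rewrite !ge0_integralTE //; apply: ge_ereal_sup => _ [h hf <-].
apply: le_ereal_sup_tmp; eexists; last exact: lexx.
by exists h => // x; exact: le_trans (hf x) (fg x).
Qed.

Lemma natr_mul_subr_expr_le (R : realFieldType) (x : R) n : 0 <= x -> x <= 1 ->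
  n%:R * (1 - x) * x ^+ n <= 1 - x ^+ n.
Proof.
move=> x_ge0 x_le1; elim: n => [|n IH]; first by rewrite !mul0r expr0 subrr.
have xn_ge0 : 0 <= x ^+ n := exprn_ge0 n x_ge0.
have h1 : 0 <= (n.+1%:R * (1 - x) * x ^+ n) * (1 - x) by rewrite !mulr_ge0 // subr_ge0.
have h2 : 0 <= (1 - x) * x ^+ n by rewrite mulr_ge0 // subr_ge0.
by rewrite exprS; move: h1 IH h2; rewrite -addn1 natrD; nra.
Qed.

Section Expectation.
Variables (R : realType) (d : measure_display) (Z : measurableType d)
  (D : probability Z R) (hstar : Z -> bool) (dO : measure_display)
  (Omega : measurableType dO) (P : probability Omega R) (X : nat -> Omega -> Z).
Hypotheses (mpos : measurable [set z | hstar z])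
  (mX : forall k, measurable_fun setT (X k))
  (XD : forall k (A : set Z), measurable A -> P (X k @^-1` A) = D A)
  (indep : mutually_independent P X).

Definition pos_prob := fine (D [set z | hstar z]).

Lemma pos_probE : D [set z | hstar z] = pos_prob%:E.
Proof. by rewrite /pos_prob fineK // fin_num_measure. Qed.

Lemma pos_prob_le1 : pos_prob <= 1.
Proof. by rewrite -lee_fin -pos_probE probability_le1. Qed.

Definition negative_prefix_event m :=
  \bigcap_(i in [set: 'I_m]) (X i @^-1` ~` [set z | hstar z]).

Lemma measurable_negative_prefix_event m : measurable (negative_prefix_event m).
Proof.
have -> : negative_prefix_event m =
    \bigcap_(i in [set k | (k < m)%N]) (X i @^-1` ~` [set z | hstar z]).
  apply/seteqP; split => w /= h i; first by move=> hi; exact: (h (Ordinal hi)).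
  by move=> _; apply: h; exact: ltn_ord.
apply: bigcap_measurableType => k _.
by have := mX k measurableT (measurableC mpos); rewrite setTI.
Qed.

Lemma prob_negative_prefix_event m :
  P (negative_prefix_event m) = ((1 - pos_prob) ^+ m)%:E.
Proof.
rewrite /negative_prefix_event (@indep m (fun i : 'I_m => nat_of_ord i) val_inj
  (fun _ => ~` [set z | hstar z]) (fun _ => measurableC mpos)).
rewrite (eq_bigr (fun _ => (1 - pos_prob)%:E)) ?prodEFin ?prodr_const ?card_ord //.
move=> i _; have mneg := measurableC mpos.
by rewrite XD //= probability_setC // pos_probE.
Qed.

Lemma indic_negative_prefix_event m w :
  \1_(negative_prefix_event m) w = (negative_prefix hstar (X^~ w) m)%:R :> R.
Proof.
rewrite indicE.
suff -> : (w \in negative_prefix_event m) = negative_prefix hstar (X^~ w) m by [].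
apply/idP/negative_prefixP => [/set_mem h i hi|h].
  by apply/negP; exact: (h (Ordinal hi)).
by apply/mem_set => i _; apply/negP; apply: h; exact: ltn_ord.
Qed.

(* The tail-sum formula: the number of blocks is geometric with success
   probability [1 - (1 - p)^n]. *)
Lemma expectation_block_count_series (K : R) n : 0 <= K -> (0 < n)%N ->
  0 < pos_prob ->
  (\int[P]_w block_count_series hstar (X^~ w) K n)%E =
  (K / (1 - (1 - pos_prob) ^+ n))%:E.
Proof.
move=> K_ge0 n_gt0 p_gt0; pose E k := negative_prefix_event (n * k).
transitivity (\int[P]_w \sum_(0 <= k <oo) (K * \1_(E k) w)%:E)%E.
  apply: eq_integral => w _; apply: eq_eseriesr => k _.
  by rewrite indic_negative_prefix_event.
rewrite integral_nneseries //; last 2 first.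
- move=> k; apply/measurable_realfun.measurable_EFinP.
  apply: measurable_realfun.measurable_funM; first exact: measurable_cst.
  exact/measurable_realfun.measurable_indic/measurable_negative_prefix_event.
- by move=> k w _; rewrite lee_fin mulr_ge0 // indicE ler0n.
transitivity (\sum_(0 <= k <oo) (K * ((1 - pos_prob) ^+ n) ^+ k)%:E)%E.
  apply: eq_eseriesr => k _; under eq_integral => x _ do rewrite EFinM.
  rewrite ge0_integralZl_EFin //; last first.
    apply/measurable_realfun.measurable_EFinP.
    exact/measurable_realfun.measurable_indic/measurable_negative_prefix_event.
  have mE := measurable_negative_prefix_event (n * k).
  rewrite integral_indic // setIT -exprM EFinM; congr (_ * _)%E.
  exact: prob_negative_prefix_event.
apply: eseries_geometric; first by rewrite exprn_ge0 // subr_ge0 pos_prob_le1.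
by rewrite exprn_ilt1 ?subr_ge0 ?pos_prob_le1 // ?gtrDl ?oppr_lt0 // -lt0n.
Qed.

End Expectation.

Lemma ceil_natr_bounds (R : archiRealFieldType) (x : R) : 0 <= x ->
  x <= `|Num.ceil x|%:R <= x + 1.
Proof.
move=> x_ge0.
have ceil_ge0 : 0 <= Num.ceil x by rewrite ceil_ge0 // (lt_le_trans _ x_ge0) // ltrN10.
rewrite natr_absz ger0_norm //; have /andP [lt le] := ceil_itv x.
by rewrite le /=; move: lt; rewrite intrD /=; lra.
Qed.

Lemma alternating_cost_ratio_le (R : realFieldType) (crew cver p : R) :
  0 < crew -> crew <= cver -> 0 < p ->
  (crew + cver) / p <= 6 * (cver / crew) * Num.max (crew / p) cver.
Proof.
move=> crew_gt0 crew_le_cver p_gt0; have cver_gt0 := lt_le_trans crew_gt0 crew_le_cver.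
apply: le_trans (_ : 6 * (cver / crew) * (crew / p) <= _); last first.
  by rewrite ler_wpM2l ?le_max ?lexx // mulr_ge0 // divr_ge0 // ltW.
have -> : 6 * (cver / crew) * (crew / p) = 6 * cver / p.
  by field; rewrite !gt_eqF.
by rewrite ler_pM2r ?invr_gt0 //; lra.
Qed.

Lemma block_cost_ratio_le (R : realFieldType) (crew cver p S : R) (n : nat) :
  0 < crew -> crew <= cver -> 0 < p <= 1 -> 1 <= S -> (0 < n)%N ->
  S * cver <= n%:R * crew <= S * cver + crew ->
  (n%:R * crew + S * cver) / (1 - (1 - p) ^+ n) <= 6 * S * Num.max (crew / p) cver.
Proof.
move=> crew_gt0 crew_le_cver /andP [p_gt0 p_le1] S_ge1 n_gt0 /andP [n_ge n_le].
set M := Num.max (crew / p) cver; set A := (1 - p) ^+ n; set K := n%:R * crew + S * cver.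
have A_ge0 : 0 <= A by rewrite exprn_ge0 // subr_ge0.
have A_lt1 : A < 1 by rewrite exprn_ilt1 ?subr_ge0 // -?lt0n // gtrDl oppr_lt0.
have bern : n%:R * p * A <= 1 - A.
  have q_ge0 : 0 <= 1 - p by lra.
  have q_le1 : 1 - p <= 1 by lra.
  by have := natr_mul_subr_expr_le n q_ge0 q_le1; rewrite subKr.
have cver_le_M : cver <= M by rewrite le_max lexx orbT.
have crew_le_pM : crew <= p * M by rewrite mulrC -ler_pdivrMr // le_max lexx.
have M_ge0 : 0 <= M by rewrite (le_trans _ cver_le_M) // (le_trans (ltW crew_gt0)).
have M_le_SM : M <= S * M by rewrite ler_peMl.
have K_le3 : K <= 3 * S * M.
  have : S * cver <= S * M by rewrite ler_wpM2l // (le_trans ler01).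
  by rewrite /K; lra.
have K_le2 : K <= 2 * (n%:R * crew) by rewrite /K; lra.
have nA : n%:R * crew * A <= M * (1 - A).
  apply: le_trans (_ : M * (n%:R * p * A) <= _); last exact: ler_wpM2l.
  have -> : M * (n%:R * p * A) = n%:R * (p * M) * A by ring.
  by rewrite ler_wpM2r // ler_wpM2l.
(* Split [K = K (1 - A) + K A] and bound [K A] through [n p A <= 1 - A]. *)
rewrite ler_pdivrMr ?subr_gt0 //.
have g1 : K * (1 - A) <= 3 * S * M * (1 - A) by apply: ler_wpM2r; lra.
have g2 : K * A <= 2 * (n%:R * crew) * A by exact: ler_wpM2r.
have g3 : M * (1 - A) <= S * M * (1 - A) by apply: ler_wpM2r; lra.
have g4 : 0 <= S * M * (1 - A) by rewrite !mulr_ge0 //; lra.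
lra.
Qed.

Section ExpectedCostACS.
Variables (R : realType) (d : measure_display) (Z : measurableType d)
  (H : set (Z -> bool)) (crew cver : R) (D : probability Z R) (hstar : Z -> bool)
  (dO : measure_display) (Omega : measurableType dO) (P : probability Omega R)
  (X : nat -> Omega -> Z) (sel : seq Z -> seq nat).
Hypotheses (crew_gt0 : 0 < crew) (crew_le_cver : crew <= cver) (Hhstar : H hstar)
  (mpos : measurable [set z | hstar z]) (Dpos : (0 < D [set z | hstar z])%E)
  (mX : forall k, measurable_fun setT (X k))
  (XD : forall k (A : set Z), measurable A -> P (X k @^-1` A) = D A)
  (indep : mutually_independent P X)
  (sel_min : forall pts, min_hitting H pts (sel pts)).

Let p := pos_prob D hstar.
Let M := Num.max (crew / p) cver.

Let cver_gt0 : 0 < cver. Proof. exact: lt_le_trans crew_gt0 crew_le_cver. Qed.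
Let p_gt0 : 0 < p. Proof. by rewrite -lte_fin -pos_probE. Qed.

Let cost_ge0 (pi : policy Z) w : (0 <= cost crew cver pi (X^~ w) hstar)%E.
Proof.
apply: le_trans (cost_ge_cver _ _ crew_gt0 crew_le_cver pi).
by rewrite lee_fin ltW.
Qed.

Lemma exp_cost_ge_rew (pi : policy Z) :
  ((crew / p)%:E <= exp_cost P X crew cver pi hstar)%E.
Proof.
have -> : crew / p = crew / (1 - (1 - p) ^+ 1) by rewrite expr1 subKr.
rewrite -(expectation_block_count_series (n:=1) mpos mX XD indep (ltW crew_gt0) isT p_gt0).
rewrite /exp_cost; apply: ge0_le_integral_nonmeasurable => w.
  by apply: nneseries_ge0 => k _ _; rewrite lee_fin mulr_ge0 // ltW.
exact: cost_ge_block_count_series1.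
Qed.

Lemma exp_cost_ge_ver (pi : policy Z) : (cver%:E <= exp_cost P X crew cver pi hstar)%E.
Proof.
have <- : (\int[P]_w cver%:E)%E = cver%:E.
  by rewrite integral_cst // -[RHS]mule1; congr (_ * _)%E; exact: probability_setT.
rewrite /exp_cost; apply: ge0_le_integral_nonmeasurable => w; last exact: cost_ge_cver.
by rewrite lee_fin ltW.
Qed.

Lemma Jstar_ge_max : (M%:E <= Jstar P X crew cver hstar)%E.
Proof.
apply/ereal_infP => _ [pi _ <-].
by rewrite EFin_max ge_max exp_cost_ge_rew exp_cost_ge_ver.
Qed.

Lemma exp_cost_ACS_alternating_le : ((cver / crew)%:E < star_number R H)%E ->
  (exp_cost P X crew cver (ACS H crew cver sel) hstar <= ((crew + cver) / p)%:E)%E.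
Proof.
move=> star_gt; have -> : (crew + cver) / p = (crew + cver) / (1 - (1 - p) ^+ 1).
  by rewrite expr1 subKr.
have K_ge0 : 0 <= crew + cver by rewrite addr_ge0 // ltW.
rewrite -(expectation_block_count_series (n:=1) mpos mX XD indep K_ge0 isT p_gt0).
rewrite /exp_cost; apply: ge0_le_integral_nonmeasurable => w; first exact: cost_ge0.
exact: cost_ACS_alternating_le.
Qed.

Let exists_positive : exists z, hstar z.
Proof.
apply/not_existsP => none; move: Dpos.
by rewrite (_ : [set z | hstar z] = set0) ?measure0 ?ltxx // -subset0 => z /none.
Qed.

Lemma exp_cost_ACS_blocks_le (S : R) :
  star_number R H = S%:E -> S <= cver / crew ->
  (exp_cost P X crew cver (ACS H crew cver sel) hstar <= (6 * S * M)%:E)%E.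
Proof.
move=> sE S_le; have [z hz] := exists_positive.
have S_ge1 : 1 <= S by rewrite -lee_fin -sE (star_number_ge1 _ Hhstar hz).
have S_gt0 : 0 < S := lt_le_trans ltr01 S_ge1.
have c_gt0 : 0 < cver / crew by rewrite divr_gt0.
have size_le pts : (size (sel pts))%:R <= S.
  by rewrite -lee_fin -sE; exact: size_min_hitting_le_star z (sel_min pts).
have star_le : ~~ ((cver / crew)%:E < star_number R H)%E by rewrite sE lte_fin -leNgt.
set n := cs_n H crew cver.
have /andP [n_ge n_le] : cver / crew * S <= n%:R <= cver / crew * S + 1.
  by rewrite /n /cs_n sE /=; apply: ceil_natr_bounds; rewrite ltW // mulr_gt0.
have n_gt0 : (0 < n)%N by rewrite -(ltr0n R) (lt_le_trans _ n_ge) // mulr_gt0.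
pose K := n%:R * crew + S * cver.
apply: le_trans (_ : \int[P]_w block_count_series hstar (X^~ w) K n <= _)%E.
  rewrite /exp_cost; apply: ge0_le_integral_nonmeasurable => w; first exact: cost_ge0.
  exact: cost_ACS_blocks_le.
have K_ge0 : 0 <= K by rewrite addr_ge0 // mulr_ge0 // ltW.
rewrite (expectation_block_count_series mpos mX XD indep K_ge0 n_gt0 p_gt0).
rewrite lee_fin block_cost_ratio_le ?p_gt0 ?pos_prob_le1 //.
have -> : S * cver = cver / crew * S * crew by field; rewrite gt_eqF.
by rewrite -[X in _ <= _ + X]mul1r -mulrDl !ler_pM2r // n_ge n_le.
Qed.

Lemma exp_cost_ACS_le : exists2 m : R,
  Order.min (star_number R H) (cver / crew)%:E = m%:E /\ 0 <= m &
  (exp_cost P X crew cver (ACS H crew cver sel) hstar <= (6 * m * M)%:E)%E.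
Proof.
have c_ge1 : 1 <= cver / crew by rewrite ler_pdivlMr // mul1r.
have [star_gt|] := boolP ((cver / crew)%:E < star_number R H)%E.
  exists (cver / crew); first by rewrite (min_r (ltW star_gt)) (le_trans ler01).
  apply: le_trans (exp_cost_ACS_alternating_le star_gt) _.
  by rewrite lee_fin alternating_cost_ratio_le.
rewrite -leNgt => star_le; have [z hz] := exists_positive.
have s_ge0 : (0 <= star_number R H)%E by rewrite (le_trans _ (star_number_ge1 _ Hhstar hz)).
have s_fin : star_number R H \is a fin_num.
  by rewrite ge0_fin_numE // (le_lt_trans star_le (ltey _)).
exists (fine (star_number R H)); first by rewrite (min_l star_le) fineK // fine_ge0.
by apply: exp_cost_ACS_blocks_le; rewrite ?fineK // -lee_fin fineK.
Qed.

End ExpectedCostACS.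

Unset Implicit Arguments.
Set Strict Implicit.

Theorem theorem4 (R : realType) (d : measure_display) (Z : measurableType d)
    (H : set (Z -> bool)) (crew cver : R)
    (D : probability Z R) (hstar : Z -> bool)
    (dO : measure_display) (Omega : measurableType dO)
    (P : probability Omega R) (X : nat -> Omega -> Z)
    (sel : seq Z -> seq nat) :
  H (fun _ => false) ->
  0 < crew -> crew <= cver ->
  H hstar ->
  measurable [set z | hstar z] ->
  (0 < D [set z | hstar z])%E ->
  (forall k, measurable_fun setT (X k)) ->
  (forall k (A : set Z), measurable A -> P (X k @^-1` A) = D A) ->
  mutually_independent P X ->
  (forall pts, min_hitting H pts (sel pts)) ->
  (exp_cost P X crew cver (ACS H crew cver sel) hstar
     <= 6%:E * Order.min (star_number R H) (cver / crew)%:E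
          * Jstar P X crew cver hstar)%E.
Proof.
move=> _ crew_gt0 crew_le_cver Hhstar mpos Dpos mX XD indep sel_min.
have [m [-> m_ge0]] :=
  exp_cost_ACS_le crew_gt0 crew_le_cver Hhstar mpos Dpos mX XD indep sel_min.
move/le_trans; apply; rewrite !EFinM; apply: lee_wpmul2l.
  by rewrite -EFinM lee_fin mulr_ge0.
exact: Jstar_ge_max crew_gt0 crew_le_cver mpos Dpos mX XD indep.
Qed.
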